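(* The number of zero-normalized $\Gamma_{m,n}$-semimodules $\Delta$ satisfying $\widehat{\Delta}=\Delta$ equals $\binom{\lfloor m/2\rfloor+\lfloor n/2\rfloor}{\lfloor m/2\rfloor}$.
   Context: Let $m,n$ be coprime positive integers and $\Gamma_{m,n}=\{am+bn:a,b\in\mathbb{Z}_{\ge0}\}$. A $\Gamma_{m,n}$-semimodule is $\Delta\subset\mathbb{Z}_{\ge0}$ with $\Delta+\Gamma_{m,n}\subset\Delta$; zero-normalized means $\min\Delta=0$. Its dual is $\Delta^*=\{\varphi\in\mathbb{Z}:\varphi+\Delta\subset\Gamma_{m,n}\}$ and $\widehat\Delta=\Delta^*-\min\Delta^*$ (equivalently $\max(\mathbb{Z}\setminus\Delta)-(\mathbb{Z}\setminus\Delta)$). *)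

From mathcomp Require Import all_boot all_order all_algebra.
Set Implicit Arguments. Unset Strict Implicit. Unset Printing Implicit Defensive.
Import Order.TTheory GRing.Theory Num.Theory.

Definition inGamma (m n : nat) (z : int) : Prop :=
  exists a b : nat, z = Posz (a * m + b * n)%N.

Definition is_semimodule (m n : nat) (D : nat -> Prop) : Prop :=
  forall x a b : nat, D x -> D (x + a * m + b * n)%N.

(* zero-normalized: min Delta = 0 (Delta is a subset of Z_{>=0}). *)
Definition zero_normalized (D : nat -> Prop) : Prop := D 0%N.

Definition in_dual (m n : nat) (D : nat -> Prop) (phi : int) : Prop :=
  forall x : nat, D x -> inGamma m n (phi + Posz x)%R.

Definition is_min_dual (m n : nat) (D : nat -> Prop) (mu : int) : Prop :=
  in_dual m n D mu /\ (forall phi, in_dual m n D phi -> (mu <= phi)%R).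

(* hat Delta = Delta^* - min Delta^*, as a predicate on Z. *)
Definition hat (m n : nat) (D : nat -> Prop) (z : int) : Prop :=
  exists mu : int, is_min_dual m n D mu /\ in_dual m n D (z + mu)%R.

Definition self_dual (m n : nat) (D : nat -> Prop) : Prop :=
  forall z : int, hat m n D z <-> (exists x : nat, z = Posz x /\ D x).

Definition P_selfdual (m n : nat) (D : nat -> Prop) : Prop :=
  [/\ is_semimodule m n D, zero_normalized D & self_dual m n D].

From mathcomp Require Import all_boot all_order all_algebra.
From mathcomp Require Import zify ring.
From Stdlib Require Import Classical ClassicalEpsilon FunctionalExtensionality.
Import Order.TTheory GRing.Theory Num.Theory.
Set Implicit Arguments. Unset Strict Implicit. Unset Printing Implicit Defensive.
Local Open Scope ring_scope.

(* Writing integers as a m + b n, a zero-normalized semimodule D is the set of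
   points on or above the graph of a profile T : Z -> Z (nonincreasing, with
   T (a + n) = T a - m), translated so that its minimum is 0.  As z lies in
   Gamma_{m,n} iff F - z does not (F the Frobenius number), the dual of D is F
   minus the complement of D, so hat D = D exactly when the complement of D is
   a reflection of D; for the profile this says that T a + T (k - a) is
   constant.  Translating D normalizes the centre to k = 1 and T 0 = 0 (with a
   parity choice for T 1 when n is even), which makes the profile unique.  A
   normalized profile is determined by its values at 1, ..., n/2, i.e. by a
   nondecreasing sequence of n/2 integers in [0, m/2], and there are
   binomial(m/2 + n/2, m/2) such sequences. *)

Definition is_minz (P : int -> Prop) (mu : int) := P mu /\ forall z, P z -> mu <= z.

Lemma is_minz_uniq P mu mu' : is_minz P mu -> is_minz P mu' -> mu = mu'.
Proof. by case=> Pmu minmu [Pmu' minmu']; apply/le_anti; rewrite minmu // minmu'. Qed.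

Lemma exists_minz (P : int -> Prop) (z0 L : int) :
  P z0 -> (forall z, P z -> L <= z) -> exists mu, is_minz P mu.
Proof.
move=> Pz0 lbP.
suff from_offset : forall k : nat, P (L + k%:Z) -> exists mu, is_minz P mu.
  have := lbP z0 Pz0 => Lz0; apply: (from_offset `|z0 - L|%N).
  by have -> : L + `|z0 - L|%N = z0 by lia.
elim/ltn_ind => k IH Pk.
case: (classic (exists j : nat, (j < k)%N /\ P (L + j%:Z))) => [[j [jk Pj]]|noj].
  exact: IH Pj.
exists (L + k%:Z); split => // z Pz.
rewrite leNgt; apply/negP => zlt; apply: noj; exists `|z - L|%N.
have := lbP z Pz => Lz; have -> : L + `|z - L|%N = z by lia.
by split => //; lia.
Qed.

Lemma exists_lower_edge (P : int -> Prop) (b0 b1 : int) :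
  b1 < b0 -> P b0 -> ~ P b1 -> exists b, P b /\ ~ P (b - 1).
Proof.
move=> lt_b1b0 Pb0 notPb1.
suff from_gap : forall (k : nat) b, b - b1 = k%:Z -> P b -> exists b, P b /\ ~ P (b - 1).
  by apply: (from_gap `|b0 - b1|%N b0) => //; lia.
elim=> [|k IH] b bk Pb; first by exfalso; apply: notPb1; have <- : b = b1 by lia.
case: (classic (P (b - 1))) => Pb1; last by exists b.
by apply: (IH (b - 1)) => //; lia.
Qed.

(** * Symmetry of Gamma_{m,n} and duality *)

Definition frobenius (m n : nat) : int := (n%:Z - 1) * m - n%:Z.

Lemma inGamma0 m n : inGamma m n 0.
Proof. by exists 0%N, 0%N. Qed.

Section Bezout.

Variables m n : nat.
Hypothesis mn_coprime : coprime m n.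

Lemma bezout_decomp z : exists a b : int, z = a * m + b * n.
Proof.
have /coprimezP [[u v] /= uv] : coprimez m n by rewrite coprimezE.
by exists (z * u), (z * v); rewrite -!mulrA -mulrDr uv mulr1.
Qed.

Hypothesis n_gt0 : (0 < n)%N.

Lemma bezout_decomp_uniq (a b a' b' : int) : a * m + b * n = a' * m + b' * n ->
  exists j : int, a' = a + j * n /\ b' = b - j * m.
Proof.
move=> E.
have nm_coprime : coprimez n m by rewrite coprimezE coprime_sym.
have : (n %| (a' - a) * m)%Z by apply/dvdzP; exists (b - b'); lia.
rewrite Gauss_dvdzl // => /dvdzP [j j_def].
by exists j; split; nia.
Qed.

Lemma bezout_decomp_mod z : exists a b : int, 0 <= a < n /\ z = a * m + b * n.
Proof.
have [a [b ->]] := bezout_decomp z.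
exists (a %% n)%Z, (b + (a %/ n)%Z * m); split; first lia.
rewrite {1}(divz_eq a n); ring.
Qed.

Lemma inGamma_decomp (a b : int) : 0 <= a < n -> inGamma m n (a * m + b * n) <-> 0 <= b.
Proof.
move=> a_range; split.
  case=> a' [b' E].
  have [j [ea eb]] : exists j : int, a'%:Z = a + j * n /\ b'%:Z = b - j * m.
    by apply: bezout_decomp_uniq; rewrite E PoszD !PoszM.
  have j_ge0 : 0 <= j by nia.
  nia.
case: a a_range => [a'|//] _; case: b => [b'|//] _.
by exists a', b'; rewrite PoszD !PoszM.
Qed.

Lemma inGamma_frobenius z : inGamma m n z <-> ~ inGamma m n (frobenius m n - z).
Proof.
have [a [b [a_range ->]]] := bezout_decomp_mod z.
have -> : frobenius m n - (a * m + b * n) = (n%:Z - 1 - a) * m + (-1 - b) * n.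
  by rewrite /frobenius; ring.
by rewrite !inGamma_decomp //; lia.
Qed.

End Bezout.

Definition intset (D : nat -> Prop) (z : int) : Prop := exists x : nat, z = x /\ D x.

Definition self_complementary (E : int -> Prop) := exists c, forall z, E z <-> ~ E (c - z).

Lemma intset_ge0 D z : intset D z -> 0 <= z.
Proof. by case=> x [-> _]. Qed.

Lemma intset_addGamma m n D z g :
  is_semimodule m n D -> intset D z -> inGamma m n g -> intset D (z + g).
Proof.
move=> Dsm [x [-> Dx]] [a [b ->]].
by exists (x + a * m + b * n)%N; split; [rewrite -PoszD addnA | exact: Dsm].
Qed.

Section Duality.

Variables (m n : nat) (D : nat -> Prop).
Hypotheses (mn_coprime : coprime m n) (n_gt0 : (0 < n)%N).
Hypothesis D_semimodule : is_semimodule m n D.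

Lemma in_dualE phi : in_dual m n D phi <-> ~ intset D (frobenius m n - phi).
Proof.
split.
  move=> Dphi [x [Ex Dx]]; have := Dphi x Dx.
  rewrite -Ex addrC subrK => /inGamma_frobenius; apply => //.
  by rewrite subrr; exact: inGamma0.
move=> notD x Dx; apply: NNPP => notG.
have G' : inGamma m n (frobenius m n - (phi + x%:Z)).
  by apply: NNPP => G'; apply: notG; apply/inGamma_frobenius.
apply: notD; have -> : frobenius m n - phi = x%:Z + (frobenius m n - (phi + x%:Z)) by ring.
by apply: (intset_addGamma D_semimodule) G'; exists x.
Qed.

Hypothesis D0 : zero_normalized D.

Lemma self_dualE : self_dual m n D <-> self_complementary (intset D).
Proof.
split.
  move=> Dsd.
  have [mu [[Dmu minmu] _]] : hat m n D 0 by apply/Dsd; exists 0%N.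
  exists (frobenius m n - mu) => z.
  have -> : frobenius m n - mu - z = frobenius m n - (z + mu) by ring.
  rewrite -in_dualE; split.
    case=> x [-> Dx].
    have [mu' [mu'_min Dxmu']] : hat m n D x by apply/Dsd; exists x.
    by rewrite (is_minz_uniq (conj Dmu minmu) mu'_min).
  by move=> Dzmu; apply/Dsd; exists mu.
case=> c Dc.
have dualE phi : in_dual m n D phi <-> intset D (c - frobenius m n + phi).
  rewrite in_dualE (Dc (c - _ + phi)).
  by have -> : c - (c - frobenius m n + phi) = frobenius m n - phi by ring.
have dual_min : is_min_dual m n D (frobenius m n - c).
  split; first by apply/dualE; rewrite addrC addrA subrK subrr; exists 0%N.
  by move=> phi /dualE /intset_ge0; lia.
move=> z; split.
  case=> mu [mu_min]; rewrite (is_minz_uniq mu_min dual_min) dualE.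
  by have -> : c - frobenius m n + (z + (frobenius m n - c)) = z by ring.
case=> x [-> Dx]; exists (frobenius m n - c); split => //.
apply/dualE; have -> : c - frobenius m n + (x%:Z + (frobenius m n - c)) = x by ring.
by exists x.
Qed.

End Duality.

(** * Profiles of semimodules *)

Definition step_nonincr (T : int -> int) := forall a, T (a + 1) <= T a.

Definition quasi_periodic (m n : nat) (T : int -> int) :=
  forall a, T (a + n%:Z) = T a - m%:Z.

Definition above (m n : nat) (T : int -> int) (z : int) :=
  exists a b : int, z = a * m + b * n /\ T a <= b.

Definition shift (T : int -> int) (a0 b0 : int) (a : int) := T (a + a0) - b0.

Definition point_symmetric (T : int -> int) (k C : int) := forall a, T a + T (k - a) = C.

Lemma shift_shift T a0 b0 a1 b1 : shift (shift T a0 b0) a1 b1 = shift T (a1 + a0) (b0 + b1).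
Proof. by apply: functional_extensionality => a; rewrite /shift addrA; ring. Qed.

Lemma inGamma_nat m n (x y : nat) : inGamma m n (x%:Z * m + y%:Z * n).
Proof. by exists x, y; rewrite PoszD !PoszM. Qed.

Section Profiles.

Variables m n : nat.

Section FixedProfile.

Variable T : int -> int.
Hypotheses (T_nonincr : step_nonincr T) (T_qp : quasi_periodic m n T).

Lemma quasi_periodicZ (j : int) a : T (a + j * n) = T a - j * m.
Proof.
have qpn (k : nat) b : T (b + k%:Z * n) = T b - k%:Z * m.
  elim: k b => [|k IH] b; first by rewrite !mul0r addr0 subr0.
  have -> : b + k.+1%:Z * n = (b + k%:Z * n) + n by rewrite -addn1 PoszD; ring.
  by rewrite T_qp IH -addn1 PoszD; ring.
case: j => k; first exact: qpn.
have := qpn k.+1 (a + Negz k * n).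
have -> : a + Negz k * n + k.+1%:Z * n = a by rewrite NegzE; ring.
by move=> ->; rewrite NegzE; ring.
Qed.

Lemma nonincr_le a a' : a <= a' -> T a' <= T a.
Proof.
have step (k : nat) b : T (b + k%:Z) <= T b.
  elim: k b => [|k IH] b; first by rewrite addr0.
  have -> : b + k.+1%:Z = (b + k%:Z) + 1 by rewrite -addn1 PoszD; ring.
  exact: le_trans (T_nonincr _) (IH b).
by move=> le_aa'; have := step `|a' - a|%N a; have -> : a + `|a' - a|%N = a' by lia.
Qed.

Lemma above_addGamma z g : above m n T z -> inGamma m n g -> above m n T (z + g).
Proof.
move=> [a [b [-> le]]] [x [y ->]].
exists (a + x%:Z), (b + y%:Z); split; first by rewrite PoszD !PoszM; ring.
by have := @nonincr_le a (a + x%:Z); lia.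
Qed.

Lemma shift_nonincr a0 b0 : step_nonincr (shift T a0 b0).
Proof. by move=> a; rewrite /shift lerD2r -addrAC. Qed.

Lemma shift_quasi_periodic a0 b0 : quasi_periodic m n (shift T a0 b0).
Proof. by move=> a; rewrite /shift addrAC T_qp; ring. Qed.

Hypotheses (mn_coprime : coprime m n) (n_gt0 : (0 < n)%N).

Lemma above_ge z : above m n T z -> (T 0 - m%:Z) * n%:Z <= z.
Proof.
move=> [a [b [-> le]]].
have Ea : a = (a %% n)%Z + (a %/ n)%Z * n by rewrite addrC -divz_eq.
have r_range : 0 <= (a %% n)%Z < n by lia.
have Ta : T a = T (a %% n)%Z - (a %/ n)%Z * m by rewrite {1}Ea quasi_periodicZ.
have Tr : T n%:Z <= T (a %% n)%Z by apply: nonincr_le; lia.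
have := T_qp 0; rewrite add0r => Tn.
have -> : a * m + b * n = (a %% n)%Z * m + (b + (a %/ n)%Z * m) * n by rewrite {1}Ea; ring.
nia.
Qed.

Lemma above_has_min : exists mu, is_minz (above m n T) mu.
Proof.
apply: (@exists_minz _ (0 * m%:Z + T 0 * n%:Z) ((T 0 - m%:Z) * n%:Z)).
  by exists 0, (T 0).
exact: above_ge.
Qed.

Lemma aboveE (a b : int) : above m n T (a * m + b * n) <-> T a <= b.
Proof.
split; last by exists a, b.
case=> a' [b' [E le]].
have [j [ea eb]] := bezout_decomp_uniq mn_coprime n_gt0 E.
by rewrite ea eb quasi_periodicZ in le; lia.
Qed.

End FixedProfile.

Hypotheses (mn_coprime : coprime m n) (n_gt0 : (0 < n)%N).

Lemma above_shift T a0 b0 z : quasi_periodic m n T ->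
  above m n (shift T a0 b0) z <-> above m n T (z + (a0 * m + b0 * n)).
Proof.
move=> T_qp; have [a [b ->]] := bezout_decomp mn_coprime z.
have -> : a * m + b * n + (a0 * m + b0 * n) = (a + a0) * m + (b + b0) * n by ring.
rewrite (aboveE (shift_quasi_periodic T_qp a0 b0) mn_coprime n_gt0).
by rewrite (aboveE T_qp mn_coprime n_gt0) /shift; lia.
Qed.

Lemma above_inj T T' : quasi_periodic m n T -> quasi_periodic m n T' ->
  (forall z, above m n T z <-> above m n T' z) -> T =1 T'.
Proof.
move=> T_qp T'_qp eqTT' a.
have := eqTT' (a * m + T a * n); have := eqTT' (a * m + T' a * n).
by rewrite !(aboveE T_qp mn_coprime n_gt0) !(aboveE T'_qp mn_coprime n_gt0); lia.
Qed.

End Profiles.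

Section SemimoduleProfile.

Variables (m n : nat) (D : nat -> Prop).
Hypothesis D_semimodule : is_semimodule m n D.

Lemma intset_addnm z (x y : nat) : intset D z -> intset D (z + (x%:Z * m + y%:Z * n)).
Proof. by move=> Dz; apply: intset_addGamma Dz (inGamma_nat m n x y). Qed.

Lemma column_threshold (a b0 : int) : intset D (a * m + b0 * n) ->
  ~ intset D (a * m + (b0 - 1) * n) -> forall b : int, intset D (a * m + b * n) <-> b0 <= b.
Proof.
move=> Db0 notDb0 b; split => [Db | le_b0b].
  apply: NNPP => /negP; rewrite -ltNge => lt_bb0; apply: notDb0.
  have := intset_addnm 0 `|(b0 - 1 - b)%R|%N Db.
  have -> : `|(b0 - 1 - b)%R|%N%:Z = b0 - 1 - b by lia.
  by rewrite mul0r add0r; congr intset; ring.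
have := intset_addnm 0 `|(b - b0)%R|%N Db0.
have -> : `|(b - b0)%R|%N%:Z = b - b0 by lia.
by rewrite mul0r add0r; congr intset; ring.
Qed.

Hypothesis D0 : zero_normalized D.

Lemma intset_Gamma (x y : nat) : intset D (x%:Z * m + y%:Z * n).
Proof. by rewrite -[_ + _]add0r; apply: intset_addnm; exists 0%N. Qed.

Hypotheses (mn_coprime : coprime m n) (n_gt0 : (0 < n)%N).

Lemma column_edge (a : int) : exists b : int,
  intset D (a * m + b * n) /\ ~ intset D (a * m + (b - 1) * n).
Proof.
pose b0 := - ((a %/ n)%Z * m).
apply: (@exists_lower_edge (fun b => intset D (a * m + b * n)) b0 (b0 - m%:Z - 1)); first lia.
  have -> : a * m + b0 * n = `|(a %% n)%Z|%N%:Z * m + 0%N%:Z * n.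
    rewrite /b0 {1}(divz_eq a n) mul0r addr0.
    have -> : `|(a %% n)%Z|%N%:Z = (a %% n)%Z by lia.
    ring.
  exact: intset_Gamma.
move/intset_ge0.
have -> : a * m + (b0 - m%:Z - 1) * n = (a %% n)%Z * m - (m%:Z + 1) * n.
  by rewrite /b0 {1}(divz_eq a n); ring.
have : 0 <= (a %% n)%Z < n by lia.
nia.
Qed.

Lemma semimodule_above : exists T,
  [/\ step_nonincr T, quasi_periodic m n T & forall z, intset D z <-> above m n T z].
Proof.
pose T a := proj1_sig (constructive_indefinite_description _ (column_edge a)).
have columnE (a b : int) : intset D (a * m + b * n) <-> T a <= b.
  have [Da notDa] := proj2_sig (constructive_indefinite_description _ (column_edge a)).
  exact: column_threshold Da notDa b.
have T_qp : quasi_periodic m n T.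
  move=> a; apply/le_anti/andP; split.
    rewrite -columnE; have -> : (a + n%:Z) * m + (T a - m%:Z) * n = a * m + T a * n by ring.
    exact/columnE.
  have : T a <= T (a + n%:Z) + m%:Z.
    rewrite -columnE.
    have -> : a * m + (T (a + n%:Z) + m%:Z) * n = (a + n%:Z) * m + T (a + n%:Z) * n by ring.
    exact/columnE.
  lia.
exists T; split => //.
  move=> a; rewrite -columnE.
  have := intset_addnm 1 0 (proj2 (columnE a (T a)) (lexx _)).
  by have -> : a * m + T a * n + (1%N%:Z * m + 0%N%:Z * n) = (a + 1) * m + T a * n by ring.
move=> z; have [a [b ->]] := bezout_decomp mn_coprime z.
by rewrite columnE (aboveE T_qp mn_coprime n_gt0).
Qed.

End SemimoduleProfile.

Lemma above_self_complementary m n T : coprime m n -> (0 < n)%N -> quasi_periodic m n T ->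
  self_complementary (above m n T) <-> exists k C, point_symmetric T k C.
Proof.
move=> mn_coprime n_gt0 T_qp; split.
  case=> c Tc; have [k [c2 ec]] := bezout_decomp mn_coprime c.
  exists k, (c2 + 1) => a.
  have leE b : T a <= b <-> ~ (T (k - a) <= c2 - b).
    rewrite -(aboveE T_qp mn_coprime n_gt0) -(aboveE T_qp mn_coprime n_gt0 (k - a)) Tc ec.
    by have -> : k * m + c2 * n - (a * m + b * n) = (k - a) * m + (c2 - b) * n by ring.
  have lt1 : c2 - T a < T (k - a) by rewrite ltNge; apply/negP; apply/leE.
  have le2 : T a <= c2 + 1 - T (k - a) by apply/leE; lia.
  lia.
case=> k [C TC]; exists (k * m + (C - 1) * n) => z.
have [a [b ->]] := bezout_decomp mn_coprime z.
have -> : k * m + (C - 1) * n - (a * m + b * n) = (k - a) * m + (C - 1 - b) * n by ring.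
by rewrite !(aboveE T_qp mn_coprime n_gt0); have := TC a; lia.
Qed.

Definition delta_of (m n : nat) (T : int -> int) (x : nat) : Prop :=
  exists mu, is_minz (above m n T) mu /\ above m n T (x%:Z + mu).

Section DeltaOf.

Variables m n : nat.
Hypotheses (mn_coprime : coprime m n) (n_gt0 : (0 < n)%N).

Section FixedProfile.

Variable T : int -> int.
Hypotheses (T_nonincr : step_nonincr T) (T_qp : quasi_periodic m n T).

Lemma intset_delta_of : exists mu,
  is_minz (above m n T) mu /\ forall z, intset (delta_of m n T) z <-> above m n T (z + mu).
Proof.
have [mu mu_min] := above_has_min T_nonincr T_qp mn_coprime n_gt0.
exists mu; split => // z; split.
  by case=> x [-> [mu' [mu'_min Tx]]]; rewrite (is_minz_uniq mu_min mu'_min).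
move=> Tz; have := proj2 mu_min _ Tz => le_mu.
exists `|z|%N; split; first lia.
by exists mu; split => //; have -> : `|z|%N%:Z = z by lia.
Qed.

Lemma delta_of_semimodule : is_semimodule m n (delta_of m n T).
Proof.
move=> x a b [mu [mu_min Tx]]; exists mu; split => //.
have := above_addGamma T_nonincr Tx (inGamma_nat m n a b).
by rewrite !PoszD !PoszM; congr above; ring.
Qed.

Lemma delta_of0 : zero_normalized (delta_of m n T).
Proof.
have [mu mu_min] := above_has_min T_nonincr T_qp mn_coprime n_gt0.
by exists mu; split => //; rewrite add0r; case: mu_min.
Qed.

Lemma delta_of_self_dual k C : point_symmetric T k C -> P_selfdual m n (delta_of m n T).
Proof.
move=> T_sym; split; [exact: delta_of_semimodule | exact: delta_of0 |].
apply/(self_dualE mn_coprime n_gt0 delta_of_semimodule delta_of0).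
have [c Tc] : self_complementary (above m n T).
  by apply/(above_self_complementary mn_coprime n_gt0 T_qp); exists k, C.
have [mu [_ deltaE]] := intset_delta_of.
exists (c - mu - mu) => z; rewrite !deltaE Tc.
by have -> : c - (z + mu) = c - mu - mu - z + mu by ring.
Qed.

End FixedProfile.

Lemma delta_of_inj T T' : step_nonincr T -> quasi_periodic m n T ->
  step_nonincr T' -> quasi_periodic m n T' ->
  (forall x, delta_of m n T x <-> delta_of m n T' x) ->
  exists a0 b0, T' =1 shift T a0 b0.
Proof.
move=> T_nonincr T_qp T'_nonincr T'_qp eqTT'.
have [mu [_ TE]] := intset_delta_of T_nonincr T_qp.
have [mu' [_ T'E]] := intset_delta_of T'_nonincr T'_qp.
have [a0 [b0 e]] := bezout_decomp mn_coprime (mu - mu').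
exists a0, b0; apply: (above_inj mn_coprime n_gt0 T'_qp (shift_quasi_periodic T_qp a0 b0)).
move=> z; rewrite above_shift // -e.
have -> : z = (z - mu') + mu' by ring.
rewrite -T'E; have -> : z - mu' + mu' + (mu - mu') = (z - mu') + mu by ring.
by rewrite -TE; split; case=> x [ex Dx]; exists x; split => //; apply/eqTT'.
Qed.

Lemma semimodule_delta_of D T c0 : step_nonincr T -> quasi_periodic m n T ->
  zero_normalized D -> (forall z, above m n T z <-> intset D (z + c0)) ->
  forall x, D x <-> delta_of m n T x.
Proof.
move=> T_nonincr T_qp D0 TD.
have mu_min : is_minz (above m n T) (- c0).
  split; first by apply/TD; rewrite addNr; exists 0%N.
  by move=> z /TD /intset_ge0; lia.
move=> x; split.
  by move=> Dx; exists (- c0); split => //; apply/TD; rewrite addrNK; exists x.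
case=> mu [mu'_min /TD]; rewrite (is_minz_uniq mu'_min mu_min) addrNK.
by case=> y [/eqP]; rewrite eqz_nat => /eqP ->.
Qed.

End DeltaOf.

(** * Canonical profiles *)

(* When n is even, moving the centre of symmetry by half a period n/2 flips
   the parity of T 1 (as m is then odd); the parity condition selects one of
   the two resulting normal forms. *)
Definition canonical_profile (n : nat) (T : int -> int) :=
  [/\ T 0 = 0, point_symmetric T 1 (T 1) & (~~ odd n -> exists q : int, T 1 = 2 * q + 1)].

Lemma nat_halfE (n : nat) : n%:Z = 2 * (n./2)%:Z + (odd n)%:Z.
Proof. by have := odd_double_half n; rewrite -muln2; case: (odd n) => /= nE; lia. Qed.

Lemma coprime_even_odd m n : coprime m n -> ~~ odd n -> odd m.
Proof.
move=> mn_coprime n_even; apply: contraLR mn_coprime => m_even.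
have two_dvd : (2 %| gcdn m n)%N.
  by rewrite dvdn_gcd -!dvdn2 /= ?negbK in m_even n_even *; rewrite m_even n_even.
by apply/negP => /eqP gcd1; rewrite gcd1 in two_dvd.
Qed.

Lemma shift_self0 T a : shift T a (T a) 0 = 0.
Proof. by rewrite /shift add0r subrr. Qed.

Lemma point_symmetric_shift T k C a0 b0 :
  point_symmetric T k C -> point_symmetric (shift T a0 b0) (k - 2 * a0) (C - 2 * b0).
Proof.
move=> T_sym a; rewrite /shift.
have -> : k - 2 * a0 - a + a0 = k - (a + a0) by ring.
by have := T_sym (a + a0); lia.
Qed.

Lemma point_symmetric_one T C : T 0 = 0 -> point_symmetric T 1 C -> point_symmetric T 1 (T 1).
Proof. by move=> T0 T_sym; have := T_sym 0; rewrite T0 add0r subr0 => ->. Qed.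

Section CanonicalProfile.

Variables m n : nat.
Hypotheses (mn_coprime : coprime m n) (n_gt0 : (0 < n)%N).

Lemma point_symmetric_addn T k C : quasi_periodic m n T ->
  point_symmetric T k C -> point_symmetric T (k + n%:Z) (C - m%:Z).
Proof.
move=> T_qp T_sym a; have -> : k + n%:Z - a = (k - a) + n%:Z by ring.
by rewrite T_qp; have := T_sym a; lia.
Qed.

(* An even centre 2p is impossible for n even: comparing the values at p + n/2
   and p - n/2 would make m even. *)
Lemma point_symmetric_odd_centre T k C : quasi_periodic m n T ->
  point_symmetric T k C -> exists p C', point_symmetric T (2 * p + 1) C'.
Proof.
move=> T_qp T_sym.
have kE : k = 2 * (k %/ 2)%Z + (k %% 2)%Z by lia.
case: (boolP ((k %% 2)%Z == 0)) => [/eqP k_even | k_odd]; last first.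
  by exists (k %/ 2)%Z, C; have <- : k = 2 * (k %/ 2)%Z + 1 by lia.
have nE := nat_halfE n; have mE := nat_halfE m.
case: (boolP (odd n)) => n_odd.
  exists ((k %/ 2)%Z + (n./2)%:Z), (C - m%:Z).
  have -> : 2 * ((k %/ 2)%Z + (n./2)%:Z) + 1 = k + n%:Z by rewrite n_odd in nE; lia.
  exact: point_symmetric_addn.
exfalso; have m_odd := coprime_even_odd mn_coprime n_odd.
rewrite m_odd in mE; rewrite (negbTE n_odd) in nE.
pose p := (k %/ 2)%Z; pose h := (n./2)%:Z.
have e1 := T_sym p; have e2 := T_sym (p + h); have e3 := T_qp (p - h).
have q1 : k - p = p by rewrite /p; lia.
have q2 : k - (p + h) = p - h by rewrite /p; lia.
have q3 : p - h + n%:Z = p + h by rewrite /h; lia.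
rewrite q1 in e1; rewrite q2 in e2; rewrite q3 in e3.
by move: e1 e2 e3; set u := T p; set v := T (p + h); set w := T (p - h); lia.
Qed.

Lemma canonical_half_shift T : quasi_periodic m n T -> ~~ odd n ->
  T 0 = 0 -> point_symmetric T 1 (T 1) -> (T 1 %% 2)%Z = 0 ->
  canonical_profile n (shift T (n./2)%:Z (T (n./2)%:Z)).
Proof.
move=> T_qp n_even T0 T_sym T1_even.
have mE := nat_halfE m; have nE := nat_halfE n.
rewrite (coprime_even_odd mn_coprime n_even) in mE; rewrite (negbTE n_even) in nE.
pose h := (n./2)%:Z.
have T'_sym : point_symmetric (shift T h (T h)) 1 (T 1 - m%:Z - 2 * T h).
  have := point_symmetric_shift h (T h) (point_symmetric_addn T_qp T_sym).
  by have -> : 1 + n%:Z - 2 * h = 1 by rewrite /h; lia.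
have T'1 := T'_sym 0; rewrite shift_self0 add0r subr0 in T'1.
split; [exact: shift_self0 | by rewrite T'1 |].
move=> _; rewrite T'1; exists ((T 1 %/ 2)%Z - (m./2)%:Z - T h - 1).
by move: T1_even mE; set u := T 1; set v := T h; lia.
Qed.

Lemma canonical_shift T k C : quasi_periodic m n T -> point_symmetric T k C ->
  exists a0 b0, canonical_profile n (shift T a0 b0).
Proof.
move=> T_qp T_sym.
have [p [C' T_odd_sym]] := point_symmetric_odd_centre T_qp T_sym.
pose T1 := shift T p (T p).
have T1_qp : quasi_periodic m n T1 := shift_quasi_periodic T_qp p (T p).
have T1_sym : point_symmetric T1 1 (T1 1).
  apply: (point_symmetric_one (shift_self0 T p)).
  have := point_symmetric_shift p (T p) T_odd_sym.
  have -> : 2 * p + 1 - 2 * p = 1 by ring.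
  by apply.
case: (boolP (odd n)) => n_odd.
  by exists p, (T p); split; [exact: shift_self0 | exact: T1_sym | rewrite n_odd].
case: (boolP ((T1 1 %% 2)%Z == 1)) => /eqP T11.
  exists p, (T p); rewrite -/T1; split; [exact: shift_self0 | exact: T1_sym |].
  by move=> _; exists (T1 1 %/ 2)%Z; move: T11; set u := T1 1; lia.
exists ((n./2)%:Z + p), (T p + T1 (n./2)%:Z); rewrite -shift_shift -/T1.
apply: canonical_half_shift => //; first exact: shift_self0.
by move: T11; set u := T1 1; lia.
Qed.

End CanonicalProfile.

Section CanonicalUnique.

Variables m n : nat.
Hypotheses (mn_coprime : coprime m n) (n_gt0 : (0 < n)%N).
Variable T : int -> int.
Hypotheses (T_qp : quasi_periodic m n T) (T_canonical : canonical_profile n T).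

(* Having centres of symmetry 1 and 1 + 2 a0 makes T (x + 2 a0) - T x constant,
   which is compatible with quasi-periodicity only if n divides 2 a0. *)
Lemma canonical_shift_period a0 b0 :
  canonical_profile n (shift T a0 b0) -> exists l : int, 2 * a0 = l * n.
Proof.
case: T_canonical => T0 T_sym _ [_ T'_sym _].
pose d := T (1 + a0) + b0 - T 1.
have Td x : T (x + 2 * a0) = T x + d.
  have e1 := T'_sym (x + a0); have e2 := T_sym x; rewrite /shift in e1.
  have q1 : x + a0 + a0 = x + 2 * a0 by ring.
  have q2 : 1 - (x + a0) + a0 = 1 - x by ring.
  rewrite q1 q2 in e1.
  move: e1 e2; rewrite /d; set u := T (x + 2 * a0); set v := T (1 - x); set w := T x;
    set y := T (1 + a0); set z := T 1; lia.
have Tjd (j : nat) : T (j%:Z * (2 * a0)) = j%:Z * d.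
  elim: j => [|j IH]; first by rewrite !mul0r T0.
  have -> : j.+1%:Z * (2 * a0) = j%:Z * (2 * a0) + 2 * a0 by rewrite -addn1 PoszD; ring.
  by rewrite Td IH -addn1 PoszD; ring.
have nm_coprime : coprimez n m by rewrite coprimezE coprime_sym.
have : (n %| 2 * a0 * m)%Z.
  apply/dvdzP; exists (- d).
  have := quasi_periodicZ T_qp (2 * a0) 0; rewrite add0r T0 sub0r mulrC Tjd.
  lia.
by rewrite Gauss_dvdzl // => /dvdzP [l l_def]; exists l.
Qed.

Lemma canonical_shift_eq a0 b0 : canonical_profile n (shift T a0 b0) -> shift T a0 b0 =1 T.
Proof.
move=> T'_canonical; have [l l_def] := canonical_shift_period T'_canonical.
have [T0 T_sym T_par] := T_canonical; have [T'0 _ T'_par] := T'_canonical.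
have b0E : b0 = T a0 by move: T'0; rewrite /shift add0r; lia.
have lE : l = 2 * (l %/ 2)%Z + (l %% 2)%Z by lia.
case: (boolP ((l %% 2)%Z == 0)) => [/eqP l_even | l_odd].
  have a0E : a0 = (l %/ 2)%Z * n by move: l_def; rewrite lE l_even addr0; nia.
  move=> a; rewrite /shift b0E a0E !(quasi_periodicZ T_qp).
  by have := quasi_periodicZ T_qp (l %/ 2)%Z 0; rewrite add0r T0 => ->; ring.
exfalso; have nE := nat_halfE n; have mE := nat_halfE m.
case: (boolP (odd n)) => n_odd.
  have two_n_coprime : coprimez 2 n by rewrite coprimezE /= coprime2n.
  have : (2 %| l * n%:Z)%Z by apply/dvdzP; exists a0; rewrite -l_def; ring.
  by rewrite Gauss_dvdzl // => /dvdzP [q lq]; lia.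
rewrite (coprime_even_odd mn_coprime n_odd) in mE; rewrite (negbTE n_odd) in nE.
have [q1 T1_odd] := T_par n_odd; have [q2 T'1_odd] := T'_par n_odd.
pose h := (n./2)%:Z.
have a0E : a0 = h + (l %/ 2)%Z * n%:Z.
  by move: l_def; rewrite lE (_ : (l %% 2)%Z = 1); [rewrite nE /h; nia | lia].
have T'1 : shift T a0 b0 1 = T (1 + h) - T h.
  rewrite /shift b0E a0E addrA -[h + _]add0r addrA !(quasi_periodicZ T_qp) add0r; ring.
have e2 := T_sym h; have e3 := T_qp (1 - h).
have q : 1 - h + n%:Z = 1 + h by rewrite /h; lia.
rewrite q in e3.
move: T'1 e2 e3 T1_odd T'1_odd; set u := T (1 + h); set v := T h; set w := T (1 - h);
  set y := T 1; set z := shift T a0 b0 1; lia.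
Qed.

End CanonicalUnique.

(** * Canonical profiles as sequences *)

Definition extend_block (m n : nat) (B : nat -> int) (a : int) : int :=
  B `|(a %% n)%Z|%N - m%:Z * (a %/ n)%Z.

Lemma divz_decomp (n : nat) (a : int) : (0 < n)%N ->
  exists (q : int) (r : nat), a = q * n%:Z + r%:Z /\ (r < n)%N.
Proof.
move=> n_gt0; exists (a %/ n)%Z, `|(a %% n)%Z|%N; split; last by lia.
have -> : `|(a %% n)%Z|%N%:Z = (a %% n)%Z by lia.
exact: divz_eq.
Qed.

Section ExtendBlock.

Variables (m n : nat) (B : nat -> int).
Hypothesis n_gt0 : (0 < n)%N.

Lemma extend_blockE (q : int) (r : nat) : (r < n)%N ->
  extend_block m n B (q * n%:Z + r%:Z) = B r - m%:Z * q.
Proof.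
move=> r_lt_n; rewrite /extend_block.
have n_neq0 : n%:Z != 0 by lia.
rewrite divzMDl // divz_small; last by apply/andP; split; lia.
rewrite modzMDl modz_small; last by apply/andP; split; lia.
by rewrite addr0.
Qed.

Lemma extend_block_small (r : nat) : (r < n)%N -> extend_block m n B r%:Z = B r.
Proof. by move=> r_lt_n; have := extend_blockE 0 r_lt_n; rewrite mul0r add0r mulr0 subr0. Qed.

Lemma extend_block_quasi_periodic : quasi_periodic m n (extend_block m n B).
Proof.
move=> a; have [q [r [-> r_lt_n]]] := divz_decomp a n_gt0.
have -> : q * n%:Z + r%:Z + n%:Z = (q + 1) * n%:Z + r%:Z by ring.
by rewrite !extend_blockE //; ring.
Qed.

Lemma extend_block_nonincr : (forall j, (j < n)%N -> B j.+1 <= B j) ->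
  B n = B 0%N - m%:Z -> step_nonincr (extend_block m n B).
Proof.
move=> B_nonincr Bn a; have [q [r [-> r_lt_n]]] := divz_decomp a n_gt0.
rewrite extend_blockE //.
case: (ltnP r.+1 n) => r1_n.
  have -> : q * n%:Z + r%:Z + 1 = q * n%:Z + r.+1%:Z by rewrite -addn1 PoszD; ring.
  by rewrite extend_blockE //; have := B_nonincr r (ltnW r1_n); lia.
have r1E : r.+1 = n by apply/eqP; rewrite eqn_leq r1_n r_lt_n.
have -> : q * n%:Z + r%:Z + 1 = (q + 1) * n%:Z + 0%N%:Z by rewrite -r1E -addn1 PoszD; ring.
by rewrite extend_blockE //; have := B_nonincr r r_lt_n; rewrite r1E Bn; lia.
Qed.

Lemma extend_block_symmetric : (forall r : nat, (r < n)%N ->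
    extend_block m n B r%:Z + extend_block m n B (1 - r%:Z) = extend_block m n B 1) ->
  point_symmetric (extend_block m n B) 1 (extend_block m n B 1).
Proof.
move=> B_sym a; have [q [r [-> r_lt_n]]] := divz_decomp a n_gt0.
have T_qp := extend_block_quasi_periodic.
have -> : q * n%:Z + r%:Z = r%:Z + q * n%:Z by ring.
have -> : 1 - (r%:Z + q * n%:Z) = (1 - r%:Z) + (- q) * n%:Z by ring.
by rewrite !(quasi_periodicZ T_qp) -(B_sym r r_lt_n); ring.
Qed.

End ExtendBlock.

Definition admissible (m n : nat) (s : seq nat) :=
  [/\ size s = n./2, sorted leq s & all (fun x => x <= m./2)%N s].

(* 1-based entry of s, padded by h beyond its end. *)
Definition entry (h : nat) (s : seq nat) (j : nat) : nat := nth h s j.-1.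

(* The entries of s for j <= n/2, completed so that x_j + x_(n+1-j) = 2 h. *)
Definition sym_entry (n h : nat) (s : seq nat) (j : nat) : nat :=
  if (j <= n./2)%N then entry h s j else (2 * h - entry h s (n.+1 - j))%N.

(* T j = -(s_1 + odd m + x_j) for 0 < j < n: then T 1 = -(2 s_1 + odd m), and the
   symmetry of T about 1 amounts to x_j + x_(n+1-j) = 2 (m/2). *)
Definition block_of_seq (m n : nat) (s : seq nat) (j : nat) : int :=
  if j == 0%N then 0 else - ((entry m./2 s 1 + odd m + sym_entry n m./2 s j)%N%:Z).

Definition profile_of_seq (m n : nat) (s : seq nat) := extend_block m n (block_of_seq m n s).

Lemma entry_le h s j : all (fun x => x <= h)%N s -> (entry h s j <= h)%N.
Proof.
move=> /(all_nthP h) s_le; rewrite /entry.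
by case: (ltnP j.-1 (size s)) => j_s; [exact: s_le | rewrite nth_default].
Qed.

Lemma entry_mono h s i j : sorted leq s -> all (fun x => x <= h)%N s ->
  (0 < i)%N -> (i <= j)%N -> (entry h s i <= entry h s j)%N.
Proof.
move=> s_sorted s_le i_gt0 ij; rewrite /entry.
case: (ltnP j.-1 (size s)) => j_s.
  by apply: (sorted_leq_nth leq_trans leqnn) => //; rewrite ?inE /=; lia.
by rewrite (nth_default _ j_s); exact: (entry_le i s_le).
Qed.

Section AdmissibleSeq.

Variables (m n : nat) (s : seq nat).
Hypothesis s_admissible : admissible m n s.

Lemma sym_entry_mono j : (0 < j)%N -> (j < n)%N ->
  (sym_entry n m./2 s j <= sym_entry n m./2 s j.+1)%N.
Proof.
case: s_admissible => s_size s_sorted s_le j_gt0 j_lt_n; rewrite /sym_entry.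
have le1 := entry_le (n.+1 - j.+1) s_le; have le2 := entry_le j s_le.
case: (leqP j.+1 n./2) => j1_half; first by rewrite ifT; [exact: entry_mono | lia].
case: (leqP j n./2) => j_half; first lia.
by have := entry_mono s_sorted s_le (i := n.+1 - j.+1) (j := n.+1 - j); lia.
Qed.

Lemma sym_entry_sym j : (0 < j)%N -> (j <= n)%N ->
  (sym_entry n m./2 s j + sym_entry n m./2 s (n.+1 - j) = 2 * m./2)%N.
Proof.
case: s_admissible => s_size s_sorted s_le j_gt0 j_le_n; rewrite /sym_entry.
have le1 := entry_le j s_le; have le2 := entry_le (n.+1 - j) s_le.
case: (leqP j n./2) => j_half.
  rewrite ifF; last lia.
  have -> : (n.+1 - (n.+1 - j) = j)%N by lia.
  lia.
case: (leqP (n.+1 - j) n./2) => j'_half; first lia.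
(* here n is odd and j is the middle index n/2 + 1, beyond the end of s *)
have pad i : (n./2 < i)%N -> entry m./2 s i = m./2.
  by move=> i_gt; rewrite /entry nth_default // s_size; lia.
by rewrite !pad; lia.
Qed.

Hypothesis n_gt0 : (0 < n)%N.

Lemma block_of_seq_period : block_of_seq m n s n = block_of_seq m n s 0 - m%:Z.
Proof.
case: s_admissible => _ _ s_le.
rewrite /block_of_seq eqxx ifF; last lia.
rewrite /sym_entry ifF; last lia.
have := entry_le 1 s_le; have -> : (n.+1 - n = 1)%N by lia.
have := nat_halfE m; lia.
Qed.

Lemma block_of_seq_nonincr j : (j < n)%N -> block_of_seq m n s j.+1 <= block_of_seq m n s j.
Proof.
move=> j_lt_n; rewrite /block_of_seq /=.
case: (posnP j) => [->|j_gt0]; first lia.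
by have := sym_entry_mono j_gt0 j_lt_n; lia.
Qed.

Lemma profile_of_seq_nonincr : step_nonincr (profile_of_seq m n s).
Proof.
exact: (extend_block_nonincr n_gt0 block_of_seq_nonincr block_of_seq_period).
Qed.

Lemma profile_of_seq_quasi_periodic : quasi_periodic m n (profile_of_seq m n s).
Proof. exact: extend_block_quasi_periodic. Qed.

Lemma profile_of_seq_small (j : nat) :
  (j < n)%N -> profile_of_seq m n s j%:Z = block_of_seq m n s j.
Proof. exact: extend_block_small. Qed.

Lemma profile_of_seq_canonical : coprime m n -> canonical_profile n (profile_of_seq m n s).
Proof.
move=> mn_coprime; have [s_size s_sorted s_le] := s_admissible.
have T_qp := profile_of_seq_quasi_periodic.
have T0 : profile_of_seq m n s 0 = 0 by rewrite (profile_of_seq_small (j := 0)).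
have T1 : (1 < n)%N -> profile_of_seq m n s 1 = block_of_seq m n s 1.
  by move=> n_gt1; rewrite (profile_of_seq_small (j := 1)).
have entry1 : (1 < n)%N -> sym_entry n m./2 s 1 = entry m./2 s 1.
  by move=> n_gt1; rewrite /sym_entry ifT //; lia.
split => //.
  apply: extend_block_symmetric => // -[|[|r]] r_lt_n.
  - by rewrite -/(profile_of_seq m n s) T0 add0r subr0.
  - by rewrite -/(profile_of_seq m n s) subrr T0 addr0.
  rewrite -/(profile_of_seq m n s).
  have e1 := T_qp (1 - r.+2%:Z).
  have q : 1 - r.+2%:Z + n%:Z = (n.+1 - r.+2)%N%:Z by lia.
  rewrite q in e1.
  rewrite profile_of_seq_small // in e1; last lia.
  rewrite profile_of_seq_small // T1; last lia.
  have := sym_entry_sym (j := r.+2) isT (ltnW r_lt_n).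
  move: e1; rewrite /block_of_seq /= ifF; last lia.
  by rewrite entry1; [have := nat_halfE m; lia | lia].
move=> n_even; have m_odd := coprime_even_odd mn_coprime n_even.
have n_gt1 : (1 < n)%N by move: n_even; have := nat_halfE n; lia.
rewrite T1 //; exists (- (entry m./2 s 1)%:Z - 1).
by rewrite /block_of_seq /= entry1 // m_odd; lia.
Qed.

End AdmissibleSeq.

Section CanonicalSeq.

Variables m n : nat.
Hypotheses (mn_coprime : coprime m n) (n_gt0 : (0 < n)%N).

Lemma canonical_eq_half T T' : quasi_periodic m n T -> quasi_periodic m n T' ->
  canonical_profile n T -> canonical_profile n T' ->
  (forall j : nat, (j <= n./2)%N -> T j%:Z = T' j%:Z) -> T =1 T'.
Proof.
move=> T_qp T'_qp [T0 T_sym _] [T'0 T'_sym _] eq_half a.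
have [q [r [-> r_lt_n]]] := divz_decomp a n_gt0.
rewrite addrC (quasi_periodicZ T_qp) (quasi_periodicZ T'_qp); congr (_ - _).
case: (leqP r n./2) => r_half; first exact: eq_half.
have e1 := T_sym r%:Z; have e2 := T'_sym r%:Z.
have e3 := T_qp (1 - r%:Z); have e4 := T'_qp (1 - r%:Z).
have q1 : 1 - r%:Z + n%:Z = (n.+1 - r)%N%:Z by lia.
rewrite q1 in e3 e4.
have H1 := eq_half 1%N ltac:(lia).
case: (leqP (n.+1 - r) n./2) => r'_half.
  have H2 := eq_half _ r'_half.
  move: e1 e2 e3 e4 H1 H2; set u := T r%:Z; set u' := T' r%:Z; set v := T (1 - r%:Z);
    set v' := T' (1 - r%:Z); set w := T (n.+1 - r)%N%:Z; set w' := T' (n.+1 - r)%N%:Z;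
    set y := T 1; set y' := T' 1; lia.
have q2 : (n.+1 - r)%N%:Z = r%:Z by lia.
rewrite q2 in e3 e4.
move: e1 e2 e3 e4 H1; set u := T r%:Z; set u' := T' r%:Z; set v := T (1 - r%:Z);
  set v' := T' (1 - r%:Z); set y := T 1; set y' := T' 1; lia.
Qed.

Lemma profile_of_seq_inj s s' : admissible m n s -> admissible m n s' ->
  profile_of_seq m n s =1 profile_of_seq m n s' -> s = s'.
Proof.
move=> s_adm s'_adm eqss'; have [s_size _ _] := s_adm; have [s'_size _ _] := s'_adm.
apply: (@eq_from_nth _ 0%N); first by rewrite s_size s'_size.
move=> i; rewrite s_size => i_half.
have e1 := eqss' 1; have ei := eqss' i.+1%:Z.
rewrite !profile_of_seq_small // in e1 ei; try lia.
move: e1 ei; rewrite /block_of_seq /= /sym_entry !ifT //; try lia.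
rewrite /entry /= (set_nth_default m./2 0%N (s := s)) ?s_size //.
rewrite (set_nth_default m./2 0%N (s := s')) ?s'_size //.
by set a1 := nth _ s 0; set a2 := nth _ s' 0; set b1 := nth _ s i; set b2 := nth _ s' i; lia.
Qed.

Section FixedProfile.

Variable T : int -> int.
Hypotheses (T_nonincr : step_nonincr T) (T_qp : quasi_periodic m n T).
Hypothesis T_canonical : canonical_profile n T.

(* q is the first entry of the sequence encoding T; the bound on T (n/2)
   keeps its last entry below m/2. *)
Lemma canonical_first_entry : exists q : int,
  [/\ - T 1 = 2 * q + (odd m)%:Z, 0 <= q &
      (0 < n./2)%N -> - (q + (m./2)%:Z + (odd m)%:Z) <= T (n./2)%:Z].
Proof.
have [T0 T_sym T_par] := T_canonical.
have mE := nat_halfE m; have nE := nat_halfE n.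
have T1_le0 : T 1 <= 0 by rewrite -T0; apply: nonincr_le.
pose r := (odd m)%:Z; pose h := (m./2)%:Z; pose k := (n./2)%:Z.
have T_mid := nonincr_le T_nonincr (a := k) (a' := k + 1) ltac:(lia).
case: (boolP (odd n)) => n_odd.
  rewrite n_odd in nE.
  have e1 := T_sym (k + 1); have e2 := T_qp (1 - (k + 1)).
  have q1 : 1 - (k + 1) + n%:Z = k + 1 by rewrite /k; lia.
  rewrite q1 in e2.
  exists (- T (k + 1) - h - r).
  by move: e1 e2 T1_le0 T_mid; rewrite /h /r; set u := T (k + 1); set v := T (1 - (k + 1));
    set y := T 1; set w := T k; split; lia.
have m_odd := coprime_even_odd mn_coprime n_odd.
rewrite m_odd in mE; rewrite (negbTE n_odd) in nE.
have [q' T1E] := T_par n_odd.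
exists (- q' - 1); rewrite m_odd; split.
- by move: T1E; set y := T 1; lia.
- by move: T1E T1_le0; set y := T 1; lia.
move=> _; have e1 := T_sym k; have e2 := T_qp (1 - k).
have q1 : 1 - k + n%:Z = k + 1 by rewrite /k; lia.
rewrite q1 in e2.
move: e1 e2 T_mid T1E; set u := T (k + 1); set v := T (1 - k);
  set w := T k; set y := T 1; lia.
Qed.

Lemma canonical_profile_of_seq : exists s, admissible m n s /\ profile_of_seq m n s =1 T.
Proof.
have [T0 _ _] := T_canonical.
have mE := nat_halfE m.
have [q [T1E q_ge0 T_half]] := canonical_first_entry.
pose r := (odd m)%:Z; pose h := (m./2)%:Z; pose k := (n./2)%:Z.
pose f (i : nat) := `|(- T i.+1%:Z - q - r)%R|%N.
have fE (i : nat) : (f i)%:Z = - T i.+1%:Z - q - r.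
  have := nonincr_le T_nonincr (a := 1) (a' := i.+1%:Z) ltac:(lia); rewrite /f.
  by move: T1E q_ge0; set y := T 1; set u := T i.+1%:Z; lia.
pose s := mkseq f n./2.
have s_adm : admissible m n s.
  split; first by rewrite size_mkseq.
    rewrite /s /mkseq; apply: homo_sorted (iota_sorted 0 _) => i j ij.
    have := fE i; have := fE j; have := nonincr_le T_nonincr (a := i.+1%:Z) (a' := j.+1%:Z).
    by set u := T i.+1%:Z; set v := T j.+1%:Z; lia.
  apply/(all_nthP 0%N) => i; rewrite size_mkseq => i_half; rewrite nth_mkseq //.
  have := fE i; have := T_half ltac:(lia).
  have := nonincr_le T_nonincr (a := i.+1%:Z) (a' := k) ltac:(rewrite /k; lia).
  by rewrite /h /k; set u := T i.+1%:Z; set v := T (n./2)%:Z; lia.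
exists s; split => //.
apply: (canonical_eq_half (profile_of_seq_quasi_periodic m s n_gt0) T_qp
  (profile_of_seq_canonical s_adm n_gt0 mn_coprime) T_canonical) => j j_half.
rewrite profile_of_seq_small //; last lia.
rewrite /block_of_seq; case: (posnP j) => [->|j_gt0]; first by rewrite T0.
rewrite /sym_entry ifT //.
have entry1 : (entry m./2 s 1)%:Z = q.
  by rewrite /entry /= /s nth_mkseq; [rewrite fE; move: T1E; set y := T 1; lia | lia].
have entryj : (entry m./2 s j)%:Z = - T j%:Z - q - r.
  by rewrite /entry /s nth_mkseq; [rewrite fE prednK | lia].
by move: entry1 entryj; rewrite /r; set u := T j%:Z; lia.
Qed.

End FixedProfile.

End CanonicalSeq.

Lemma admissible_enum m n : exists f : 'I_('C(m./2 + n./2, m./2)) -> seq nat,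
  [/\ forall i, admissible m n (f i), injective f &
      forall s, admissible m n s -> exists i, f i = s].
Proof.
pose S := [set t : (n./2).-tuple 'I_(m./2).+1 | sorted leq [seq val i | i <- t]].
have cardS : #|S| = 'C(m./2 + n./2, m./2).
  rewrite card_sorted_tuples addnC.
  by have := bin_sub (leq_addl m./2 n./2); rewrite addnK.
pose f i := [seq val j | j <- enum_val (cast_ord (esym cardS) i)].
exists f; split.
- move=> i; have := enum_valP (cast_ord (esym cardS) i); rewrite inE => t_sorted.
  split => //; first by rewrite size_map size_tuple.
  by apply/allP => x /mapP [j _ ->]; exact: (ltn_ord j).
- by move=> i j /(inj_map val_inj) /val_inj /enum_val_inj /cast_ord_inj.
move=> s [s_size s_sorted s_le].
have ts_size : size [seq inord x : 'I_(m./2).+1 | x <- s] == n./2 by rewrite size_map s_size.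
pose t := Tuple ts_size.
have tE : [seq val j | j <- t] = s.
  rewrite /= -map_comp; apply: map_id_in => x xs /=; rewrite inordK //.
  by move/allP: s_le => /(_ x xs).
have tS : t \in S by rewrite inE tE.
by exists (cast_ord cardS (enum_rank_in tS t)); rewrite /f cast_ordK enum_rankK_in.
Qed.

Section SelfDualSeq.

Variables m n : nat.
Hypotheses (mn_coprime : coprime m n) (n_gt0 : (0 < n)%N).

Lemma delta_of_seq_self_dual s : admissible m n s ->
  P_selfdual m n (delta_of m n (profile_of_seq m n s)).
Proof.
move=> s_adm; have [_ T_sym _] := profile_of_seq_canonical s_adm n_gt0 mn_coprime.
exact: (delta_of_self_dual mn_coprime n_gt0 (profile_of_seq_nonincr s_adm n_gt0)
  (profile_of_seq_quasi_periodic m s n_gt0) T_sym).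
Qed.

Lemma delta_of_seq_inj s s' : admissible m n s -> admissible m n s' ->
  (forall x, delta_of m n (profile_of_seq m n s) x <-> delta_of m n (profile_of_seq m n s') x) ->
  s = s'.
Proof.
move=> s_adm s'_adm eq_delta.
have T_qp := profile_of_seq_quasi_periodic m s n_gt0.
have [a0 [b0 /functional_extensionality T'E]] := delta_of_inj mn_coprime n_gt0
  (profile_of_seq_nonincr s_adm n_gt0) T_qp
  (profile_of_seq_nonincr s'_adm n_gt0) (profile_of_seq_quasi_periodic m s' n_gt0) eq_delta.
have T'_canonical := profile_of_seq_canonical s'_adm n_gt0 mn_coprime.
rewrite T'E in T'_canonical.
apply: (profile_of_seq_inj mn_coprime n_gt0 s_adm s'_adm) => a.
rewrite T'E; symmetry.
exact: (canonical_shift_eq mn_coprime n_gt0 T_qp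
  (profile_of_seq_canonical s_adm n_gt0 mn_coprime) T'_canonical).
Qed.

Lemma self_dual_delta_of_seq D : P_selfdual m n D ->
  exists s, admissible m n s /\ forall x, D x <-> delta_of m n (profile_of_seq m n s) x.
Proof.
move=> [D_semimodule D0 D_self_dual].
have [T [T_nonincr T_qp DT]] := semimodule_above D_semimodule D0 mn_coprime n_gt0.
have [k [C T_sym]] : exists k C, point_symmetric T k C.
  apply/(above_self_complementary mn_coprime n_gt0 T_qp).
  have [c Dc] := proj1 (self_dualE mn_coprime n_gt0 D_semimodule D0) D_self_dual.
  by exists c => z; rewrite -!DT.
have [a0 [b0 T'_canonical]] := canonical_shift mn_coprime n_gt0 T_qp T_sym.
have T'_nonincr := shift_nonincr T_nonincr a0 b0.
have T'_qp := shift_quasi_periodic T_qp a0 b0.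
have [s [s_adm /functional_extensionality sE]] :=
  canonical_profile_of_seq mn_coprime n_gt0 T'_nonincr T'_qp T'_canonical.
exists s; split => //; rewrite sE.
apply: (semimodule_delta_of mn_coprime n_gt0 T'_nonincr T'_qp D0 (c0 := a0 * m%:Z + b0 * n%:Z)).
by move=> z; rewrite above_shift // DT.
Qed.

End SelfDualSeq.

Local Close Scope ring_scope.

Theorem mainTheorem12 (m n : nat) :
  0 < m -> 0 < n -> coprime m n ->
  exists f : 'I_('C(m./2 + n./2, m./2)) -> (nat -> Prop),
    [/\ (forall i, P_selfdual m n (f i)),
        (forall i j, (forall x, f i x <-> f j x) -> i = j) &
        (forall D, P_selfdual m n D -> exists i, forall x, D x <-> f i x)].
Proof.
move=> _ n_gt0 mn_coprime.
have [f [f_adm f_inj f_onto]] := admissible_enum m n.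
exists (fun i => delta_of m n (profile_of_seq m n (f i))); split.
- by move=> i; exact: delta_of_seq_self_dual.
- by move=> i j /(delta_of_seq_inj mn_coprime n_gt0 (f_adm i) (f_adm j)) /f_inj.
move=> D /(self_dual_delta_of_seq mn_coprime n_gt0) [s [s_adm Ds]].
by have [i fiE] := f_onto s s_adm; exists i; rewrite fiE.
Qed.
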